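(* Let $\ket\Psi_{ABC}=\ket{\psi_1}_{A_1B_1}\otimes\ket{\psi_2}_{A_2C_1}\otimes\ket{\psi_3}_{B_2C_2}$ with $\mathcal H_A=\mathcal H_{A_1}\otimes\mathcal H_{A_2}$, $\mathcal H_B=\mathcal H_{B_1}\otimes\mathcal H_{B_2}$, $\mathcal H_C=\mathcal H_{C_1}\otimes\mathcal H_{C_2}$ and $\ket{\psi_i}$ unit vectors. Then for every integer $n\ge2$, $Z_n(A:B:C)_{\ket\Psi}>0$ and $$G_n(A:B:C)_{\ket\Psi}=\tfrac12\big(S_n(A)+S_n(B)+S_n(C)\big),$$ where $S_n(X)=\frac{1}{1-n}\log\operatorname{tr}\rho_X^n$ is the Rényi-$n$ entropy of the reduced state of $\ket\Psi$ on $X$. In particular $G(A:B:C)_{\ket\Psi}=\tfrac12(S_2(A)+S_2(B)+S_2(C))$.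
   Context: For a subsystem $X$ and $\pi\in S_N$, $\pi_X$ permutes the $N$ copies of $\mathcal H_X$ according to $\pi$ and acts trivially otherwise. For integer $n\ge2$, arrange $1,\dots,n^2$ in an $n\times n$ array row by row; $\pi^{(1)}\in S_{n^2}$ is the product of the $n$ cycles $(kn+1,\dots,kn+n)$, $k=0,\dots,n-1$ (cycling each row), and $\pi^{(2)}\in S_{n^2}$ is the product of the $n$ cycles $(j,n+j,\dots,(n-1)n+j)$, $j=1,\dots,n$ (cycling each column). $Z_n(A:B:C)_{\ket\Psi}=\bra\Psi^{\otimes n^2}(\pi^{(1)}_A\otimes\pi^{(2)}_B\otimes\mathrm{id}_C)\ket\Psi^{\otimes n^2}$ and, when $Z_n>0$, $G_n(A:B:C)_{\ket\Psi}=\frac{1}{n(1-n)}\log Z_n(A:B:C)_{\ket\Psi}$. For $n=2$, $G_2=G$ where $G(A:B:C)=-\tfrac12\log\bra\Psi^{\otimes4}((12)(34)_A\otimes(13)(24)_B\otimes(14)(23)_C)\ket\Psi^{\otimes4}$. *)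

From HB Require Import structures.
From mathcomp Require Import all_boot all_order all_algebra all_fingroup all_reals.
From mathcomp Require Import exp complex.
Set Implicit Arguments. Unset Strict Implicit. Unset Printing Implicit Defensive.
Import GRing.Theory Num.Theory.
Local Open Scope ring_scope.

Section QDefs.
Variable R : realType.
Local Notation C := R[i].

(* A pure state of ABC is a vector Psi : A * B * C -> C (computational basis). *)

(* |Psi>^{\otimes N}, copies indexed by the finite type I (#|I| = N). *)
Definition tpow (T I : finType) (Psi : T -> C) : {ffun I -> T} -> C :=
  fun x => \prod_k Psi (x k).

(* pA_A (x) pB_B (x) pC_C acting on (H_A (x) H_B (x) H_C)^{\otimes N}:
   the permutation p sends the content of copy k to copy p k, i.e.
   (P f)(x) = f (x \o p) on basis coefficients. *)
Definition permop (A B Cs I : finType) (pA pB pC : {perm I})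
  (f : {ffun I -> A * B * Cs} -> C) : {ffun I -> A * B * Cs} -> C :=
  fun x => f [ffun k => ((x (pA k)).1.1, (x (pB k)).1.2, (x (pC k)).2)].

Definition inner (T : finType) (g h : T -> C) : C := \sum_x (g x)^* * h x.

Definition permexp (A B Cs I : finType) (Psi : A * B * Cs -> C)
  (pA pB pC : {perm I}) : C :=
  inner (tpow (I:=I) Psi) (permop pA pB pC (tpow Psi)).

(* Copies for Z_n: the n x n array, copy (r, c) being entry r*n + c + 1. *)
Definition rowcyc_fun n (rc : 'I_n * 'I_n) : 'I_n * 'I_n := (rc.1, ordS rc.2).
Definition colcyc_fun n (rc : 'I_n * 'I_n) : 'I_n * 'I_n := (ordS rc.1, rc.2).
Lemma rowcyc_inj n : injective (@rowcyc_fun n).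
Proof. move=> [a b] [c d] /= [-> E]; congr pair; apply: (@ordS_inj n); exact: val_inj. Qed.
Lemma colcyc_inj n : injective (@colcyc_fun n).
Proof. move=> [a b] [c d] /= [E ->]; congr pair; apply: (@ordS_inj n); exact: val_inj. Qed.
Definition pi1 n : {perm 'I_n * 'I_n} := perm (@rowcyc_inj n).
Definition pi2 n : {perm 'I_n * 'I_n} := perm (@colcyc_inj n).

Definition Zn (A B Cs : finType) (Psi : A * B * Cs -> C) (n : nat) : C :=
  permexp Psi (pi1 n) (pi2 n) 1%g.

(* G_n = 1/(n(1-n)) log Z_n (Z_n is real positive when this is used). *)
Definition Gn (A B Cs : finType) (Psi : A * B * Cs -> C) (n : nat) : R :=
  (n%:R * (1 - n%:R))^-1 * ln (complex.Re (Zn Psi n)).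

(* G(A:B:C) on 4 copies, with (12)(34)_A (13)(24)_B (14)(23)_C (0-based). *)
Definition o4 (k : nat) : 'I_4 := inord k.
Definition G (A B Cs : finType) (Psi : A * B * Cs -> C) : R :=
  - 2^-1 * ln (complex.Re (permexp Psi
      (tperm (o4 0) (o4 1) * tperm (o4 2) (o4 3))%g
      (tperm (o4 0) (o4 2) * tperm (o4 1) (o4 3))%g
      (tperm (o4 0) (o4 3) * tperm (o4 1) (o4 2))%g)).

Definition rhoA (A B Cs : finType) (Psi : A * B * Cs -> C) (a a' : A) : C :=
  \sum_b \sum_c Psi (a, b, c) * (Psi (a', b, c))^*.
Definition rhoB (A B Cs : finType) (Psi : A * B * Cs -> C) (b b' : B) : C :=
  \sum_a \sum_c Psi (a, b, c) * (Psi (a, b', c))^*.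
Definition rhoC (A B Cs : finType) (Psi : A * B * Cs -> C) (c c' : Cs) : C :=
  \sum_a \sum_b Psi (a, b, c) * (Psi (a, b, c'))^*.

Definition kmul (X : finType) (M N : X -> X -> C) : X -> X -> C :=
  fun i j => \sum_k M i k * N k j.
Definition kid (X : finType) : X -> X -> C := fun i j => (i == j)%:R.
Definition kpow (X : finType) (M : X -> X -> C) (n : nat) : X -> X -> C :=
  iter n (kmul M) (@kid X).
Definition ktr (X : finType) (M : X -> X -> C) : C := \sum_i M i i.

(* Renyi-n entropy S_n(rho) = 1/(1-n) log tr rho^n (tr rho^n is real). *)
Definition renyi (X : finType) (rho : X -> X -> C) (n : nat) : R :=
  (1 - n%:R)^-1 * ln (complex.Re (ktr (kpow rho n))).

Definition tri_state (A1 A2 B1 B2 C1 C2 : finType)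
  (psi1 : A1 * B1 -> C) (psi2 : A2 * C1 -> C) (psi3 : B2 * C2 -> C)
  (x : (A1 * A2) * (B1 * B2) * (C1 * C2)) : C :=
  psi1 (x.1.1.1, x.1.2.1) * psi2 (x.1.1.2, x.2.1) * psi3 (x.1.2.2, x.2.2).

Definition unit_vec (T : finType) (v : T -> C) : Prop := \sum_x v x * (v x)^* = 1.

End QDefs.

From HB Require Import structures.
From mathcomp Require Import all_boot all_order all_algebra all_fingroup all_reals.
From mathcomp Require Import exp complex.
From mathcomp Require Import ring lra zify.
Import Order.TTheory GRing.Theory Num.Theory.
Local Open Scope ring_scope.
Set Implicit Arguments. Unset Strict Implicit. Unset Printing Implicit Defensive.

(* For a bipartite psi with coefficient matrix M write
   mu_n(psi) = tr (M M^* )^n, the n-th moment of the common spectrum of its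
   two reduced states; it is positive when psi is a unit vector.

   1. Reduced states of Psi are tensor products of reduced states of the
      factors, so tr rho_A^n = mu_n(psi1) mu_n(psi2), and similarly for B, C.
   2. A permutation expectation value <Psi| pA_A pB_B pC_C |Psi> factorizes
      into one "leg sum" per factor, e.g. the one of psi1 sees only pA, pB.
   3. Summing out one leg, a leg sum becomes a sum over colourings x of the
      copies of prod_k rho(x (t^-1 s k), x k); when t^-1 s consists of n
      n-cycles (the rows of a relabelled n x n array), it is a product of
      traces of closed walks, i.e. mu_n^n.
   4. For Z_n the walk permutations are pi2^-1 pi1, pi1, pi2 (diagonals, rows,
      columns); for G they are the three double transpositions of 4 copies.
   Hence Z_n = (mu_n(psi1) mu_n(psi2) mu_n(psi3))^n > 0, and the formula for
   G_n (and G) is the identity log x^n = n log x. *)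

Section FfunSums.
Variable V : nmodType.

Lemma sum_pair (X Y : finType) (F : X * Y -> V) :
  \sum_p F p = \sum_x \sum_y F (x, y).
Proof. by rewrite pair_bigA; apply: eq_bigr => -[]. Qed.

Lemma sum_ffun_pair (I X Y : finType) (F : {ffun I -> X * Y} -> V) :
  \sum_f F f = \sum_(g : {ffun I -> X}) \sum_(h : {ffun I -> Y}) F [ffun k => (g k, h k)].
Proof.
rewrite pair_bigA /=.
rewrite (reindex (fun p : {ffun I -> X} * {ffun I -> Y} => [ffun k => (p.1 k, p.2 k)])) //.
exists (fun f : {ffun I -> X * Y} => ([ffun k => (f k).1], [ffun k => (f k).2])).
  by move=> [g h] _ /=; congr pair; apply/ffunP => k; rewrite !ffunE.
by move=> f _; apply/ffunP => k; rewrite !ffunE; case: (f k).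
Qed.

Lemma sum_ffun_codom (I T T' : finType) (e : T' -> T) (e' : T -> T')
    (eK : cancel e e') (e'K : cancel e' e) (F : {ffun I -> T} -> V) :
  \sum_f F f = \sum_(g : {ffun I -> T'}) F [ffun k => e (g k)].
Proof.
rewrite (reindex (fun g : {ffun I -> T'} => [ffun k => e (g k)])) //.
exists (fun f : {ffun I -> T} => [ffun k => e' (f k)]).
  by move=> g _; apply/ffunP => k; rewrite !ffunE eK.
by move=> f _; apply/ffunP => k; rewrite !ffunE e'K.
Qed.

Lemma sum_ffun_dom (I J X : finType) (phi : J -> I) (phi_bij : bijective phi)
    (F : {ffun J -> X} -> V) :
  \sum_(x : {ffun I -> X}) F [ffun j => x (phi j)] = \sum_(y : {ffun J -> X}) F y.
Proof.
case: phi_bij => phi' phiK phi'K; symmetry.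
rewrite (reindex (fun x : {ffun I -> X} => [ffun j => x (phi j)])) //.
exists (fun y : {ffun J -> X} => [ffun i => y (phi' i)]).
  by move=> x _; apply/ffunP => k; rewrite !ffunE phi'K.
by move=> y _; apply/ffunP => k; rewrite !ffunE phiK.
Qed.

Lemma sum_ffun_curry (J1 J2 X : finType) (F : {ffun J1 * J2 -> X} -> V) :
  \sum_f F f = \sum_(g : {ffun J1 -> {ffun J2 -> X}}) F [ffun p => g p.1 p.2].
Proof.
rewrite (reindex (fun g : {ffun J1 -> {ffun J2 -> X}} => [ffun p => g p.1 p.2])) //.
exists (fun f : {ffun J1 * J2 -> X} => [ffun a => [ffun b => f (a, b)]]).
  by move=> g _; apply/ffunP => a; apply/ffunP => b; rewrite !ffunE.
by move=> f _; apply/ffunP => [[a b]]; rewrite !ffunE.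
Qed.

Definition cons_ffun (X : finType) m (a : X) (g : {ffun 'I_m -> X}) : {ffun 'I_m.+1 -> X} :=
  [ffun i => if unlift ord0 i is Some j then g j else a].

Lemma sum_ffun_cons (X : finType) m (F : {ffun 'I_m.+1 -> X} -> V) :
  \sum_f F f = \sum_(a : X) \sum_(g : {ffun 'I_m -> X}) F (cons_ffun a g).
Proof.
rewrite pair_bigA /=.
rewrite (reindex (fun p : X * {ffun 'I_m -> X} => cons_ffun p.1 p.2)) //.
exists (fun f : {ffun 'I_m.+1 -> X} => (f ord0, [ffun j => f (lift ord0 j)])).
  move=> [a g] _ /=; rewrite /cons_ffun ffunE unlift_none; congr pair.
  by apply/ffunP => j; rewrite !ffunE liftK.
move=> f _; apply/ffunP => i; rewrite /cons_ffun !ffunE.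
by case: unliftP => [j ->|->]; rewrite ?ffunE.
Qed.

End FfunSums.

Lemma codom_cons (X : finType) m (a : X) (g : {ffun 'I_m -> X}) :
  codom (cons_ffun a g) = a :: codom g.
Proof.
rewrite !codomE enum_ordSl /= /cons_ffun ffunE unlift_none -map_comp; congr cons.
by apply: eq_map => j /=; rewrite ffunE liftK.
Qed.

Section ClosedWalks.
Variable R : realType.
Local Notation C := R[i].
Variables (X : finType) (K : X -> X -> C).

Fixpoint walk_weight (a : X) (s : seq X) (b : X) : C :=
  if s is y :: s' then K a y * walk_weight y s' b else K a b.

Lemma kpow_walks m (a b : X) :
  kpow K m.+1 a b = \sum_(x : {ffun 'I_m -> X}) walk_weight a (codom x) b.
Proof.
elim: m a b => [|m IH] a b.
  rewrite /kpow /= /kmul /kid (bigD1 b) //= eqxx mulr1 big1 ?addr0; last first.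
    by move=> k /negbTE ->; rewrite mulr0.
  rewrite (eq_bigr (fun _ => K a b)) ?sumr_const ?card_ffun ?card_ord //.
  by move=> x _; have /size0nil -> : size (codom x) = 0%N by rewrite size_codom card_ord.
rewrite sum_ffun_cons.
have -> : kpow K m.+2 a b = \sum_y K a y * kpow K m.+1 y b by [].
apply: eq_bigr => y _; rewrite IH mulr_sumr; apply: eq_bigr => g _.
by rewrite codom_cons.
Qed.

Lemma walk_weight_nth (a b : X) (s : seq X) :
  walk_weight a s b = \prod_(i < (size s).+1) K (nth a (a :: s) i) (nth a (rcons s b) i).
Proof.
elim: s a => [|y s IH] a /=; first by rewrite big_ord1.
rewrite big_ord_recl /= IH; congr (_ * _); apply: eq_bigr => i _.
by congr K; apply: set_nth_default; rewrite /= ?size_rcons.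
Qed.

Lemma ktr_kpow_closed_walks n : (0 < n)%N ->
  ktr (kpow K n) = \sum_(x : {ffun 'I_n -> X}) \prod_(c : 'I_n) K (x c) (x (ordS c)).
Proof.
case: n => // m _; rewrite sum_ffun_cons /ktr; apply: eq_bigr => a _.
rewrite kpow_walks; apply: eq_bigr => g _.
rewrite walk_weight_nth size_codom card_ord; apply: eq_bigr => c _.
set f := cons_ffun a g.
have nth_f (d : 'I_m.+1) : nth a (a :: codom g) d = f d.
  by rewrite -codom_cons codomE (nth_map ord0) ?nth_ord_enum // -cardE card_ord.
rewrite nth_f nth_rcons size_codom card_ord; congr K.
have [lt_cm|] := ltnP c m; last first.
  rewrite if_same => le_mc.
  have c_m : nat_of_ord c = m by apply/eqP; rewrite eqn_leq le_mc andbT -ltnS ltn_ord.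
  have -> : ordS c = ord0 by apply: val_inj; rewrite /= c_m modnn.
  by rewrite /f /cons_ffun ffunE unlift_none.
have -> : ordS c = lift ord0 (Ordinal lt_cm).
  by apply: val_inj; rewrite /= /bump leq0n add1n modn_small.
rewrite /f /cons_ffun ffunE liftK.
have -> : nth a (codom g) c = nth a (codom g) (Ordinal lt_cm) by [].
by rewrite codomE (nth_map (Ordinal lt_cm)) ?nth_ord_enum // -cardE card_ord.
Qed.

End ClosedWalks.

(* p : I -> I consists of n disjoint n-cycles, which phi enumerates as the
   rows of an n x n array: p moves each entry one step along its row. *)
Definition row_cycles (I : finType) n (p : I -> I) (phi : 'I_n * 'I_n -> I) : Prop :=
  bijective phi /\ forall r c, p (phi (r, c)) = phi (r, ordS c).

Section CycleSums.
Variable R : realType.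
Local Notation C := R[i].

(* Summing the weight of the "walk" k -> p k over all colourings of I factors
   into one closed walk of length n per cycle of p. *)
Lemma walk_sum_row_cycles (I X : finType) n (p : I -> I) (phi : 'I_n * 'I_n -> I)
    (K : X -> X -> C) :
  row_cycles p phi -> (0 < n)%N ->
  \sum_(x : {ffun I -> X}) \prod_k K (x k) (x (p k)) = ktr (kpow K n) ^+ n.
Proof.
move=> [phi_bij p_rows] n_gt0; rewrite ktr_kpow_closed_walks //.
pose W (y : {ffun 'I_n * 'I_n -> X}) := \prod_q K (y q) (y (q.1, ordS q.2)).
transitivity (\sum_(x : {ffun I -> X}) W [ffun j => x (phi j)]).
  apply: eq_bigr => x _; rewrite (reindex phi); last exact: onW_bij.
  by apply: eq_bigr => -[r c] _; rewrite !ffunE p_rows.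
rewrite sum_ffun_dom // sum_ffun_curry.
transitivity (\sum_(z : {ffun 'I_n -> {ffun 'I_n -> X}})
   \prod_(r : 'I_n) \prod_(c : 'I_n) K (z r c) (z r (ordS c))).
  by apply: eq_bigr => z _; rewrite /W pair_big; apply: eq_bigr => -[r c] _; rewrite !ffunE.
rewrite -(bigA_distr_bigA (fun r (g : {ffun 'I_n -> X}) => \prod_c K (g c) (g (ordS c)))) /=.
by rewrite prodr_const card_ord.
Qed.

End CycleSums.

Section KernelMatrices.
Variable R : realType.
Local Notation C := R[i].

Definition kmx (X : finType) (K : X -> X -> C) : 'M[C]_#|X| :=
  \matrix_(i, j) K (enum_val i) (enum_val j).

Lemma sum_enum_val (X : finType) (F : X -> C) :
  \sum_x F x = \sum_(i < #|X|) F (enum_val i).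
Proof.
rewrite (reindex (@enum_val X predT)) //=.
by apply: onW_bij; exists (@enum_rank X) => x; rewrite ?enum_valK ?enum_rankK.
Qed.

Lemma kmx_mul (X : finType) (K L : X -> X -> C) : kmx (kmul K L) = kmx K *m kmx L.
Proof.
by apply/matrixP => i j; rewrite !mxE /kmul sum_enum_val; apply: eq_bigr => k _; rewrite !mxE.
Qed.

Lemma kmx_pow (X : finType) (K : X -> X -> C) n : kmx (kpow K n) = kmx K ^+ n.
Proof.
elim: n => [|n IH].
  by rewrite expr0; apply/matrixP => i j; rewrite !mxE /kpow /= /kid (inj_eq enum_val_inj).
by rewrite exprS -mulmxE -IH -kmx_mul.
Qed.

Lemma ktr_kpow (X : finType) (K : X -> X -> C) n : ktr (kpow K n) = \tr (kmx K ^+ n).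
Proof.
rewrite -kmx_pow /ktr sum_enum_val /mxtrace.
by apply: eq_bigr => i _; rewrite mxE.
Qed.

Lemma trmxX (F : comPzSemiRingType) p (A : 'M[F]_p) k : (A ^+ k)^T = A^T ^+ k.
Proof.
elim: k => [|k IH]; first by rewrite !expr0 trmx1.
by rewrite exprS -mulmxE trmx_mul IH exprSr -mulmxE.
Qed.

Lemma ktr_kpow_transpose (X : finType) (K : X -> X -> C) n :
  ktr (kpow (fun a a' => K a' a) n) = ktr (kpow K n).
Proof.
rewrite !ktr_kpow.
have -> : kmx (fun a a' => K a' a) = (kmx K)^T by apply/matrixP => i j; rewrite !mxE.
by rewrite -trmxX mxtrace_tr.
Qed.

Definition ktensor (X1 X2 : finType) (K1 : X1 -> X1 -> C) (K2 : X2 -> X2 -> C) :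
  X1 * X2 -> X1 * X2 -> C := fun a a' => K1 a.1 a'.1 * K2 a.2 a'.2.

Lemma kpow_tensor (X1 X2 : finType) (K1 : X1 -> X1 -> C) (K2 : X2 -> X2 -> C) n a a' :
  kpow (ktensor K1 K2) n a a' = kpow K1 n a.1 a'.1 * kpow K2 n a.2 a'.2.
Proof.
elim: n a a' => [|n IH] [a1 a2] [b1 b2].
  rewrite /kpow /= /kid xpair_eqE.
  by case: (a1 == b1); case: (a2 == b2); rewrite /= ?mulr1 ?mulr0 ?mul0r.
have kpowS (Y : finType) (L : Y -> Y -> C) y y' :
  kpow L n.+1 y y' = \sum_k L y k * kpow L n k y' by [].
rewrite !kpowS sum_pair big_distrl /=; apply: eq_bigr => k1 _.
rewrite big_distrr /=; apply: eq_bigr => k2 _.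
by rewrite IH /ktensor /=; ring.
Qed.

Lemma ktr_kpow_tensor (X1 X2 : finType) (K1 : X1 -> X1 -> C) (K2 : X2 -> X2 -> C) n :
  ktr (kpow (ktensor K1 K2) n) = ktr (kpow K1 n) * ktr (kpow K2 n).
Proof.
rewrite /ktr sum_pair big_distrl /=; apply: eq_bigr => a1 _.
by rewrite big_distrr /=; apply: eq_bigr => a2 _; rewrite kpow_tensor.
Qed.

End KernelMatrices.

Section GramMatrices.
Local Open Scope sesquilinear_scope.
Variable F : numClosedFieldType.

Lemma adjmx_mul p q r (A : 'M[F]_(p, q)) (B : 'M[F]_(q, r)) :
  (A *m B)^t* = B^t* *m A^t*.
Proof. by rewrite trmx_mul map_mxM. Qed.

Lemma mx_mulE p (A B : 'M[F]_p) : A * B = A *m B.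
Proof. by []. Qed.

Lemma mx_exprS p (A : 'M[F]_p) k : A ^+ k.+1 = A *m A ^+ k.
Proof. exact: exprS. Qed.

Lemma mxtrace_pow_mulC p q (A : 'M[F]_(p, q)) (B : 'M[F]_(q, p)) n : (0 < n)%N ->
  \tr ((A *m B) ^+ n) = \tr ((B *m A) ^+ n).
Proof.
case: n => // n _.
have powS k : (A *m B) ^+ k.+1 = A *m (B *m A) ^+ k *m B.
  elim: k => [|k IHk]; first by rewrite expr1 expr0 mulmx1.
  by rewrite mx_exprS IHk mx_exprS !mulmxA.
by rewrite powS mxtrace_mulC mulmxA -mx_exprS.
Qed.

(* tr (N N^* ) is the squared Frobenius norm of N. *)
Lemma mxtrace_gram_gt0 p q (N : 'M[F]_(p, q)) : N != 0 -> 0 < \tr (N *m N^t*).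
Proof.
move=> N_neq0; have [i [j Nij_neq0]] : exists i j, N i j != 0.
  case: (pickP (fun ij : 'I_p * 'I_q => N ij.1 ij.2 != 0)) => [[i j] Nij|N0].
    by exists i, j.
  by case/eqP: N_neq0; apply/matrixP => i j; rewrite mxE; apply/eqP/negbFE/(N0 (i, j)).
have trE : \tr (N *m N^t* ) = \sum_i \sum_j N i j * (N i j)^*.
  by apply: eq_bigr => i' _; rewrite mxE; apply: eq_bigr => j' _; rewrite !mxE.
rewrite trE (bigD1 i) //= (bigD1 j) //= -addrA ltr_wpDr ?mul_conjC_gt0 //.
by rewrite addr_ge0 ?sumr_ge0 // => *; rewrite ?sumr_ge0 // => *; rewrite mul_conjC_ge0.
Qed.

Variables (p q : nat) (M : 'M[F]_(p, q)).
Let H := M *m M^t*.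

Lemma gram_powC k : (H ^+ k)^t* = H ^+ k.
Proof.
elim: k => [|k IHk].
  by apply/matrixP => i j; rewrite !mxE eq_sym; case: eqP; rewrite ?conjC1 ?conjC0.
by rewrite {1}mx_exprS adjmx_mul IHk /H adjmx_mul trmxCK exprSr.
Qed.

(* Even powers are Gram matrices of H^k, odd ones of H^k M. *)
Lemma mxtrace_gram_pow_gt0 n : M != 0 -> (0 < n)%N -> 0 < \tr (H ^+ n).
Proof.
move=> M_neq0; elim/ltn_ind: n => n IH n_gt0.
have nE := odd_double_half n; set k := n./2 in nE.
have neq0_of_tr m (N : 'M[F]_m) : 0 < \tr N -> N != 0.
  by apply: contraTneq => ->; rewrite mxtrace0 ltxx.
case: (odd n) nE => /=; rewrite ?add0n => nE.
  have -> : H ^+ n = (H ^+ k *m M) *m (H ^+ k *m M)^t*.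
    have -> : n = (k + 1 + k)%N by rewrite -nE -addnn; lia.
    by rewrite adjmx_mul gram_powC !exprD expr1 !mx_mulE /H !mulmxA.
  apply: mxtrace_gram_gt0; case: (posnP k) => [->|k_gt0]; first by rewrite expr0 mul1mx.
  have /neq0_of_tr : 0 < \tr (H ^+ k.+1) by apply: IH; rewrite // -nE -addnn; lia.
  by apply: contraNneq; rewrite exprSr mx_mulE /H mulmxA => ->; rewrite mul0mx.
have k_gt0 : (0 < k)%N by move: n_gt0; rewrite -nE; case: k {nE}.
have -> : H ^+ n = (H ^+ k) *m (H ^+ k)^t* by rewrite gram_powC -nE -addnn exprD mx_mulE.
apply: mxtrace_gram_gt0; apply: neq0_of_tr; apply: IH => //.
by rewrite -nE -addnn; lia.
Qed.

End GramMatrices.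

Section Bipartite.
Local Open Scope sesquilinear_scope.
Variable R : realType.
Local Notation C := R[i].
Variables (X Y : finType) (psi : X * Y -> C).

Definition coefmx : 'M[C]_(#|X|, #|Y|) := \matrix_(i, j) psi (enum_val i, enum_val j).

Definition rho_left (a a' : X) : C := \sum_y psi (a, y) * (psi (a', y))^*.
Definition rho_right (b b' : Y) : C := \sum_x psi (x, b) * (psi (x, b'))^*.

Definition moment n : C := \tr ((coefmx *m coefmx^t*) ^+ n).

Lemma ktr_rho_left n : ktr (kpow rho_left n) = moment n.
Proof.
rewrite ktr_kpow; congr (\tr (_ ^+ n)); apply/matrixP => i j.
by rewrite !mxE /rho_left sum_enum_val; apply: eq_bigr => k _; rewrite !mxE.
Qed.

(* Both reduced states have the same nonzero spectrum. *)
Lemma ktr_rho_right n : (0 < n)%N -> ktr (kpow rho_right n) = moment n.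
Proof.
move=> n_gt0; rewrite ktr_kpow; have -> : kmx rho_right = (coefmx^t* *m coefmx)^T.
  apply/matrixP => i j; rewrite !mxE /rho_right sum_enum_val; apply: eq_bigr => k _.
  by rewrite !mxE mulrC.
by rewrite -trmxX mxtrace_tr mxtrace_pow_mulC.
Qed.

(* A unit vector has a nonzero coefficient matrix, hence positive moments. *)
Lemma moment_gt0 n : unit_vec psi -> (0 < n)%N -> 0 < moment n.
Proof.
move=> psi_unit n_gt0; apply: mxtrace_gram_pow_gt0 => //; apply/eqP => M_eq0.
have : \sum_x psi x * (psi x)^* = 0.
  apply: big1 => -[a b] _.
  have -> : psi (a, b) = coefmx (enum_rank a) (enum_rank b) by rewrite mxE !enum_rankK.
  by rewrite M_eq0 mxE mul0r.
by rewrite psi_unit => /eqP; rewrite oner_eq0.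
Qed.

Lemma moment_pow_gt0 n k : unit_vec psi -> (0 < n)%N -> 0 < moment n ^+ k.
Proof. by move=> psi_unit n_gt0; rewrite exprn_gt0 // moment_gt0. Qed.

(* Contribution of psi to a permutation expectation value when the copies
   of its X leg are permuted by s and those of its Y leg by t. *)
Definition leg_sum (I : finType) (s t : {perm I}) : C :=
  \sum_(u : {ffun I -> X * Y}) \prod_k ((psi (u k))^* * psi ((u (s k)).1, (u (t k)).2)).

(* Summing out the Y leg leaves a walk along t^-1 * s weighted by rho_left. *)
Lemma leg_sum_walks (I : finType) (s t : {perm I}) :
  leg_sum s t = \sum_(x : {ffun I -> X}) \prod_k rho_left (x ((t^-1 * s)%g k)) (x k).
Proof.
rewrite /leg_sum sum_ffun_pair; apply: eq_bigr => g _.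
transitivity (\sum_(h : {ffun I -> Y})
    \prod_k ((psi (g k, h k))^* * psi (g ((t^-1 * s)%g k), h k))).
  apply: eq_bigr => h _; rewrite !big_split /=; congr (_ * _).
    by apply: eq_bigr => k _; rewrite ffunE.
  rewrite (reindex_inj (@perm_inj _ (t^-1)%g)) /=.
  by apply: eq_bigr => k _; rewrite !ffunE permM /= permKV.
rewrite /rho_left bigA_distr_bigA /=; apply: eq_bigr => h _.
by apply: eq_bigr => k _; rewrite mulrC.
Qed.

Lemma leg_sum_row_cycles (I : finType) (s t : {perm I}) n (phi : 'I_n * 'I_n -> I) :
  row_cycles (t^-1 * s)%g phi -> (0 < n)%N -> leg_sum s t = moment n ^+ n.
Proof.
move=> rows n_gt0.
rewrite leg_sum_walks (walk_sum_row_cycles (fun a a' => rho_left a' a) rows) //.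
by rewrite ktr_kpow_transpose ktr_rho_left.
Qed.

End Bipartite.

Section Triangle.
Variable R : realType.
Local Notation C := R[i].
Variables A1 A2 B1 B2 C1 C2 : finType.
Variables (psi1 : A1 * B1 -> C) (psi2 : A2 * C1 -> C) (psi3 : B2 * C2 -> C).
Local Notation Psi := (tri_state psi1 psi2 psi3).

Lemma sum_mul3 (U V W : finType) (f : U -> C) (g : V -> C) (h : W -> C) :
  \sum_u \sum_v \sum_w (f u * g v * h w) = (\sum_u f u) * (\sum_v g v) * (\sum_w h w).
Proof.
symmetry; rewrite -mulrA big_distrl /=; apply: eq_bigr => u _.
rewrite big_distrl /= big_distrr /=; apply: eq_bigr => v _.
by rewrite mulrA big_distrr.
Qed.

(* Each permuted copy of Psi splits into its three bipartite factors, each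
   seeing only the permutations of its two legs. *)
Lemma permexp_triangle (I : finType) (pA pB pC : {perm I}) :
  permexp Psi pA pB pC = leg_sum psi1 pA pB * leg_sum psi2 pA pC * leg_sum psi3 pB pC.
Proof.
pose e (t : (A1 * B1) * (A2 * C1) * (B2 * C2)) : (A1 * A2) * (B1 * B2) * (C1 * C2) :=
  ((t.1.1.1, t.1.2.1), (t.1.1.2, t.2.1), (t.1.2.2, t.2.2)).
pose e' (t : (A1 * A2) * (B1 * B2) * (C1 * C2)) : (A1 * B1) * (A2 * C1) * (B2 * C2) :=
  ((t.1.1.1, t.1.2.1), (t.1.1.2, t.2.1), (t.1.2.2, t.2.2)).
have eK : cancel e e' by move=> [[[? ?] [? ?]] [? ?]].
have e'K : cancel e' e by move=> [[[? ?] [? ?]] [? ?]].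
rewrite /permexp /inner /permop /tpow (sum_ffun_codom eK e'K) sum_ffun_pair.
rewrite /leg_sum -sum_mul3 [LHS]sum_ffun_pair.
apply: eq_bigr => u _; apply: eq_bigr => v _; apply: eq_bigr => w _.
rewrite rmorph_prod -!big_split /=; apply: eq_bigr => k _.
rewrite !ffunE /tri_state /= !rmorphM /=.
by case: (u k) => ? ?; case: (v k) => ? ?; case: (w k) => ? ?; ring.
Qed.

Lemma sum_mul4 (I J K L : finType) (f : I -> C) (g : J -> C) (h : K -> L -> C) :
  \sum_i \sum_k \sum_j \sum_l (f i * g j * h k l) =
  (\sum_i f i) * (\sum_j g j) * (\sum_k \sum_l h k l).
Proof.
symmetry; rewrite -mulrA big_distrl /=; apply: eq_bigr => i _.
rewrite [in RHS]exchange_big /= big_distrl /= big_distrr /=; apply: eq_bigr => j _.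
rewrite mulrA big_distrr /=; apply: eq_bigr => k _.
by rewrite big_distrr.
Qed.

(* The reduced states are tensor products of reduced states of the factors
   (the third factor, being a unit vector, drops out). *)
Lemma rhoA_triangle : unit_vec psi3 -> rhoA Psi = ktensor (rho_left psi1) (rho_left psi2).
Proof.
move=> psi3_unit; apply: boolp.funext => -[a1 a2]; apply: boolp.funext => -[a1' a2'].
rewrite /ktensor /= -[RHS]mulr1 -{1}psi3_unit sum_pair /rho_left -sum_mul4 /rhoA sum_pair.
apply: eq_bigr => b1 _; apply: eq_bigr => b2 _; rewrite sum_pair.
apply: eq_bigr => c1 _; apply: eq_bigr => c2 _.
by rewrite /tri_state /= !rmorphM /=; ring.
Qed.

Lemma rhoB_triangle : unit_vec psi2 -> rhoB Psi = ktensor (rho_right psi1) (rho_left psi3).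
Proof.
move=> psi2_unit; apply: boolp.funext => -[b1 b2]; apply: boolp.funext => -[b1' b2'].
rewrite /ktensor /= -[RHS]mulr1 -{1}psi2_unit sum_pair /rho_left /rho_right -sum_mul4.
rewrite /rhoB sum_pair; apply: eq_bigr => a1 _; apply: eq_bigr => a2 _.
rewrite sum_pair exchange_big /=; apply: eq_bigr => c2 _; apply: eq_bigr => c1 _.
by rewrite /tri_state /= !rmorphM /=; ring.
Qed.

Lemma rhoC_triangle : unit_vec psi1 -> rhoC Psi = ktensor (rho_right psi2) (rho_right psi3).
Proof.
move=> psi1_unit; apply: boolp.funext => -[c1 c2]; apply: boolp.funext => -[c1' c2'].
rewrite /ktensor /= -[RHS]mulr1 -{1}psi1_unit sum_pair /rho_right -sum_mul4.
rewrite /rhoC sum_pair exchange_big /=; apply: eq_bigr => a2 _; apply: eq_bigr => a1 _.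
rewrite sum_pair exchange_big /=; apply: eq_bigr => b2 _; apply: eq_bigr => b1 _.
by rewrite /tri_state /= !rmorphM /=; ring.
Qed.

End Triangle.

Section ArrayPermutations.
Variable m : nat.
Local Notation n := m.+2.

Lemma pi1E (r c : 'I_n) : pi1 n (r, c) = (r, ordS c).
Proof. by rewrite /pi1 permE. Qed.

Lemma pi2E (r c : 'I_n) : pi2 n (r, c) = (ordS r, c).
Proof. by rewrite /pi2 permE. Qed.

Lemma ordS_add1 (x : 'I_n) : ordS x = 1 + x.
Proof. exact: (esym (@add_1_Zp n x)). Qed.

Lemma row_cycles_rows : row_cycles ((1%g : {perm 'I_n * 'I_n})^-1 * pi1 n)%g id.
Proof. by split=> [|r c]; [exists id | rewrite invg1 mul1g pi1E]. Qed.

Definition transpose_rc (rc : 'I_n * 'I_n) : 'I_n * 'I_n := (rc.2, rc.1).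

Lemma row_cycles_columns : row_cycles ((1%g : {perm 'I_n * 'I_n})^-1 * pi2 n)%g transpose_rc.
Proof. by split=> [|r c]; [exists transpose_rc; case | rewrite invg1 mul1g pi2E]. Qed.

(* The diagonals {(r + c, c)} are the cycles of pi^(2)^-1 pi^(1). *)
Definition shear (rc : 'I_n * 'I_n) : 'I_n * 'I_n := (rc.1 - rc.2, rc.2).

Lemma row_cycles_diagonals : row_cycles ((pi2 n)^-1 * pi1 n)%g shear.
Proof.
split=> [|r c].
  by exists (fun rc => (rc.1 + rc.2, rc.2)) => -[r c]; rewrite /shear /= ?subrK ?addrK.
have -> : shear (r, c) = pi2 n (r - c - 1, c).
  by rewrite pi2E ordS_add1 /shear /=; congr pair; rewrite [RHS]addrC subrK.
by rewrite permM permK pi1E /shear /= ordS_add1 opprD addrA addrAC.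
Qed.

End ArrayPermutations.

Definition array2 (T : Type) (a b c d : T) (rc : 'I_2 * 'I_2) : T :=
  nth a [:: a; b; c; d] (2 * rc.1 + rc.2).

Lemma row_cycles_double_transposition (T : finType) (p : T -> T) (a b c d : T) :
  #|T| = 4 -> uniq [:: a; b; c; d] -> p a = b -> p b = a -> p c = d -> p d = c ->
  row_cycles p (array2 a b c d).
Proof.
move=> card4 abcd_uniq pa pb pc pd; split; last first.
  by move=> [[|[|r]] ?] // [[|[|k]] ?].
apply: inj_card_bij; last by rewrite card4 card_prod !card_ord.
move=> [[r r_lt2] [k k_lt2]] [[r' r'_lt2] [k' k'_lt2]] /eqP.
rewrite /array2 nth_uniq //= ?ltnS; try lia.
by move=> /eqP eq_rk; congr pair; apply: val_inj => /=; lia.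
Qed.

Lemma o4_eq a b : (a < 4)%N -> (b < 4)%N -> (o4 a == o4 b) = (a == b).
Proof. by move=> a_lt4 b_lt4; rewrite -val_eqE /o4 /= !inordK. Qed.

Lemma o4_tperm a b c : (a < 4)%N -> (b < 4)%N -> (c < 4)%N ->
  tperm (o4 a) (o4 b) (o4 c) = o4 (if c == a then b else if c == b then a else c).
Proof.
move=> a_lt4 b_lt4 c_lt4.
have [->|c_neq_a] := eqVneq c a; first by rewrite tpermL.
have [->|c_neq_b] := eqVneq c b; first by rewrite tpermR.
by rewrite tpermD // o4_eq // eq_sym.
Qed.

Local Notation gA := (tperm (o4 0) (o4 1) * tperm (o4 2) (o4 3))%g.
Local Notation gB := (tperm (o4 0) (o4 2) * tperm (o4 1) (o4 3))%g.
Local Notation gC := (tperm (o4 0) (o4 3) * tperm (o4 1) (o4 2))%g.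

Lemma row_cycles_gBgA : row_cycles (gB^-1 * gA)%g (array2 (o4 0) (o4 3) (o4 1) (o4 2)).
Proof.
apply: row_cycles_double_transposition; rewrite ?card_ord ?invMg ?tpermV ?permM ?o4_tperm //.
by rewrite /= !inE !o4_eq.
Qed.

Lemma row_cycles_gCgA : row_cycles (gC^-1 * gA)%g (array2 (o4 0) (o4 2) (o4 1) (o4 3)).
Proof.
apply: row_cycles_double_transposition; rewrite ?card_ord ?invMg ?tpermV ?permM ?o4_tperm //.
by rewrite /= !inE !o4_eq.
Qed.

Lemma row_cycles_gCgB : row_cycles (gC^-1 * gB)%g (array2 (o4 0) (o4 1) (o4 2) (o4 3)).
Proof.
apply: row_cycles_double_transposition; rewrite ?card_ord ?invMg ?tpermV ?permM ?o4_tperm //.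
by rewrite /= !inE !o4_eq.
Qed.

Section TriangleExpectations.
Variable R : realType.
Variables A1 A2 B1 B2 C1 C2 : finType.
Variables (psi1 : A1 * B1 -> R[i]) (psi2 : A2 * C1 -> R[i]) (psi3 : B2 * C2 -> R[i]).
Local Notation Psi := (tri_state psi1 psi2 psi3).

Lemma Zn_triangle m :
  Zn Psi m.+2 = moment psi1 m.+2 ^+ m.+2 * moment psi2 m.+2 ^+ m.+2 * moment psi3 m.+2 ^+ m.+2.
Proof.
rewrite /Zn permexp_triangle (leg_sum_row_cycles _ (row_cycles_diagonals m)) //.
rewrite (leg_sum_row_cycles _ (row_cycles_rows m)) //.
by rewrite (leg_sum_row_cycles _ (row_cycles_columns m)).
Qed.

Lemma Zn_triangle_gt0 m : unit_vec psi1 -> unit_vec psi2 -> unit_vec psi3 ->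
  0 < Zn Psi m.+2.
Proof.
move=> psi1_unit psi2_unit psi3_unit; rewrite Zn_triangle.
by apply: mulr_gt0; first apply: mulr_gt0; exact: moment_pow_gt0.
Qed.

Lemma G_expectation_triangle :
  permexp Psi gA gB gC = moment psi1 2 ^+ 2 * moment psi2 2 ^+ 2 * moment psi3 2 ^+ 2.
Proof.
rewrite permexp_triangle (leg_sum_row_cycles _ row_cycles_gBgA) //.
by rewrite (leg_sum_row_cycles _ row_cycles_gCgA) // (leg_sum_row_cycles _ row_cycles_gCgB).
Qed.

End TriangleExpectations.

Lemma renyi_halfsum (R : realType) (t1 t2 t3 : R) n :
  0 < t1 -> 0 < t2 -> 0 < t3 -> (2 <= n)%N ->
  (n%:R * (1 - n%:R))^-1 * ln (t1 ^+ n * t2 ^+ n * t3 ^+ n) =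
  2^-1 * ((1 - n%:R)^-1 * ln (t1 * t2) + (1 - n%:R)^-1 * ln (t1 * t3) +
          (1 - n%:R)^-1 * ln (t2 * t3)).
Proof.
move=> t1_gt0 t2_gt0 t3_gt0 n_ge2.
rewrite !lnM ?posrE ?mulr_gt0 ?exprn_gt0 // !lnXn //.
rewrite -[ln t1 *+ n]mulr_natr -[ln t2 *+ n]mulr_natr -[ln t3 *+ n]mulr_natr.
have n_neq0 : (n%:R : R) != 0 by rewrite pnatr_eq0 -lt0n ltnW.
have n1_neq0 : (1 - n%:R : R) != 0 by rewrite subr_eq0 eq_sym pnatr_eq1 gtn_eqF.
by field; rewrite n_neq0 n1_neq0.
Qed.

Lemma pos_complex_real (R : realType) (z : R[i]) : 0 < z -> exists2 t, 0 < t & z = t%:C%C.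
Proof. by case: z => a b; rewrite ltcE /= => /andP [/eqP -> a_gt0]; exists a. Qed.

Lemma renyi_halfsumC (R : realType) (z1 z2 z3 : R[i]) n :
  0 < z1 -> 0 < z2 -> 0 < z3 -> (2 <= n)%N ->
  (n%:R * (1 - n%:R))^-1 * ln (complex.Re (z1 ^+ n * z2 ^+ n * z3 ^+ n)) =
  2^-1 * ((1 - n%:R)^-1 * ln (complex.Re (z1 * z2)) +
          (1 - n%:R)^-1 * ln (complex.Re (z1 * z3)) +
          (1 - n%:R)^-1 * ln (complex.Re (z2 * z3))).
Proof.
move=> /pos_complex_real [t1 t1_gt0 ->] /pos_complex_real [t2 t2_gt0 ->].
move=> /pos_complex_real [t3 t3_gt0 ->] n_ge2.
by rewrite -!rmorphXn -!rmorphM /= renyi_halfsum.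
Qed.

Theorem mainTheorem9 (R : realType) (A1 A2 B1 B2 C1 C2 : finType)
  (psi1 : A1 * B1 -> R[i]) (psi2 : A2 * C1 -> R[i]) (psi3 : B2 * C2 -> R[i])
  (h1 : unit_vec psi1) (h2 : unit_vec psi2) (h3 : unit_vec psi3) :
  let Psi := tri_state psi1 psi2 psi3 in
  (forall n : nat, (2 <= n)%N ->
     0 < Zn Psi n /\
     Gn Psi n = 2^-1 * (renyi (rhoA Psi) n + renyi (rhoB Psi) n + renyi (rhoC Psi) n))
  /\ G Psi = 2^-1 * (renyi (rhoA Psi) 2 + renyi (rhoB Psi) 2 + renyi (rhoC Psi) 2).
Proof.
move=> Psi.
have trA n : (0 < n)%N -> ktr (kpow (rhoA Psi) n) = moment psi1 n * moment psi2 n.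
  by move=> n_gt0; rewrite rhoA_triangle // ktr_kpow_tensor !ktr_rho_left.
have trB n : (0 < n)%N -> ktr (kpow (rhoB Psi) n) = moment psi1 n * moment psi3 n.
  by move=> n_gt0; rewrite rhoB_triangle // ktr_kpow_tensor ktr_rho_right // ktr_rho_left.
have trC n : (0 < n)%N -> ktr (kpow (rhoC Psi) n) = moment psi2 n * moment psi3 n.
  by move=> n_gt0; rewrite rhoC_triangle // ktr_kpow_tensor !ktr_rho_right.
split=> [[|[|m]] // _|].
  split; first exact: Zn_triangle_gt0.
  by rewrite /Gn /renyi Zn_triangle trA // trB // trC // renyi_halfsumC ?moment_gt0 // !mulrDr.
rewrite /G G_expectation_triangle.
have -> : - 2^-1 = (2%:R * (1 - 2%:R))^-1 :> R.
  by rewrite (_ : 1 - 2%:R = -1 :> R) ?mulrN1 ?invrN //; lra.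
rewrite renyi_halfsumC ?moment_gt0 //.
by rewrite /renyi trA // trB // trC // !mulrDr.
Qed.
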